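(* Let $\mu_1<\mu_2$ be real thresholds and let $\eta:\mathbb{R}^n\to\mathbb{R}^n$ be the element-wise clipping operator defined by $\eta(\boldsymbol{u})_j=\mu_1$ if $u_j\le\mu_1$, $\eta(\boldsymbol{u})_j=u_j$ if $u_j\in(\mu_1,\mu_2)$, and $\eta(\boldsymbol{u})_j=\mu_2$ if $u_j\ge\mu_2$. Let $G$ be a group and $\{\boldsymbol{T}_g\}_{g\in G}$ a family of maps $\mathbb{R}^n\to\mathbb{R}^n$ such that $\boldsymbol{T}_g(\eta(\boldsymbol{x}))=\eta(\boldsymbol{T}_g\boldsymbol{x})$ for all $g\in G$ and all $\boldsymbol{x}\in\mathbb{R}^n$. Suppose that $\mathcal{X}\subseteq\mathbb{R}^n$ cannot be identified from $\mathcal{Y}=\eta(\mathcal{X})$. Then $\mathcal{X}$ cannot be identified from the collection of measurement sets $\mathcal{Y}_g=\eta(\boldsymbol{T}_g\mathcal{X})$, $g\in G$.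
   Context: A signal set $\mathcal{X}$ (within a considered class of candidate sets) is said to be identifiable from given measurement data if no other candidate set $\mathcal{X}'\neq\mathcal{X}$ produces the same measurement data. Thus ''$\mathcal{X}$ cannot be identified from $\eta(\mathcal{X})$'' means there is a candidate set $\mathcal{X}'\neq\mathcal{X}$ with $\eta(\mathcal{X}')=\eta(\mathcal{X})$, and ''$\mathcal{X}$ cannot be identified from the sets $\mathcal{Y}_g$, $g\in G$'' means there is a candidate set $\mathcal{X}'\neq\mathcal{X}$ with $\eta(\boldsymbol{T}_g\mathcal{X}')=\eta(\boldsymbol{T}_g\mathcal{X})$ for all $g\in G$. Here $\boldsymbol{T}_g\mathcal{X}=\{\boldsymbol{T}_g\boldsymbol{x}:\boldsymbol{x}\in\mathcal{X}\}$ and $\eta(\mathcal{X})=\{\eta(\boldsymbol{x}):\boldsymbol{x}\in\mathcal{X}\}$. *)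

From HB Require Import structures.
From mathcomp Require Import all_boot all_order all_algebra.
From mathcomp Require Export classical_sets reals.
Set Implicit Arguments. Unset Strict Implicit. Unset Printing Implicit Defensive.
Import Order.TTheory GRing.Theory Num.Theory.
Local Open Scope ring_scope.
Local Open Scope classical_set_scope.

Definition clip (R : realType) (n : nat) (mu1 mu2 : R) (u : 'rV[R]_n) : 'rV[R]_n :=
  \row_j (if u 0 j <= mu1 then mu1 else if u 0 j < mu2 then u 0 j else mu2).

Definition not_identifiable (V : Type) (C : set V -> Prop)
    (eta : V -> V) (X : set V) : Prop :=
  exists X' : set V, C X' /\ X' <> X /\ eta @` X' = eta @` X.

Definition not_identifiable_family (V G : Type) (C : set V -> Prop)
    (eta : V -> V) (T : G -> V -> V) (X : set V) : Prop :=
  exists X' : set V, C X' /\ X' <> X /\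
    forall g : G, eta @` (T g @` X') = eta @` (T g @` X).

From HB Require Import structures.
From mathcomp Require Import all_boot all_order all_algebra.
From mathcomp Require Import classical_sets reals.
Import Order.TTheory GRing.Theory Num.Theory.
Local Open Scope ring_scope.
Local Open Scope classical_set_scope.

(* The witness [X'] for non-identifiability from [eta(X)] also works for every
   [eta(T_g X)]: since each [T_g] commutes with [eta], [eta(T_g X')] is the image
   of [eta(X') = eta(X)] under [T_g]. Neither the group structure of the index
   set nor the particular form of [eta] is needed. *)

Lemma image_comm (V : Type) (f h : V -> V) (A : set V) :
  f \o h =1 h \o f -> f @` (h @` A) = h @` (f @` A).
Proof. by move=> fh; rewrite !image_comp; apply: eq_imagel => x _; exact: fh. Qed.

Lemma not_identifiable_family_comm (V G : Type) (C : set V -> Prop)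
    (eta : V -> V) (T : G -> V -> V) (X : set V) :
  (forall g, eta \o T g =1 T g \o eta) ->
  not_identifiable C eta X -> not_identifiable_family C eta T X.
Proof.
move=> etaT [X' [CX' [X'X etaX']]]; exists X'; split=> //; split=> // g.
by rewrite [LHS]image_comm // [RHS]image_comm // etaX'.
Qed.

Theorem proposition1 (R : realType) (n : nat) (mu1 mu2 : R) (hmu : mu1 < mu2)
    (G : Type) (mulG : G -> G -> G) (oneG : G) (invG : G -> G)
    (mulA : forall a b c, mulG a (mulG b c) = mulG (mulG a b) c)
    (mul1g : forall a, mulG oneG a = a)
    (mulVg : forall a, mulG (invG a) a = oneG)
    (T : G -> 'rV[R]_n -> 'rV[R]_n)
    (hT : forall (g : G) (x : 'rV[R]_n), T g (clip mu1 mu2 x) = clip mu1 mu2 (T g x))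
    (C : set (set 'rV[R]_n)) (X : set 'rV[R]_n) :
  not_identifiable C (clip mu1 mu2) X ->
  not_identifiable_family C (clip mu1 mu2) T X.
Proof. by apply: not_identifiable_family_comm => g x /=; rewrite hT. Qed.
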